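(* Define $f:\mathbb{R}\to\mathbb{R}$ by $f(x)=x$ if $x\in\{0\}\cup[1,\infty)$; $f(x)=2^{-n}$ if $x\in[3\cdot2^{-(n+2)},2^{-n})$, $n=0,1,2,\dots$; $f(x)=2x-2^{-(n+1)}$ if $x\in[2^{-(n+1)},3\cdot2^{-(n+2)})$, $n=0,1,2,\dots$; and $f(x)=f(-x)$ if $x<0$. Then $f(x)\ge f(0)+x^2$ for all $x\in[-1,1]$, so $\bar x=0$ is a strong local minimizer of $f$, while $\mathbb{R}\times\{0\}\subset T_{\operatorname{gph}\partial f}(0,0)$; in particular, for every $w\ne0$ one has $0\in D(\partial f)(0|0)(w)$, so there is no $w\neq 0$-uniform positivity: $\langle z,w\rangle=0$ for $z=0\in D(\partial f)(0|0)(w)$.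
   Context: $\partial f$ is the limiting subdifferential: $\partial f(\bar x)=\{v\mid (v,-1)\in N_{\operatorname{epi} f}(\bar x,f(\bar x))\}$ with $N$ the limiting normal cone. The tangent cone is $T_\Omega(\bar u)=\{v\mid \exists t_k\downarrow0,\ v_k\to v,\ \bar u+t_kv_k\in\Omega\}$ and $D(\partial f)(\bar x|\bar v)(w)=\{z\mid (w,z)\in T_{\operatorname{gph}\partial f}(\bar x,\bar v)\}$. $\bar x$ is a strong local minimizer if there are $\kappa,\gamma>0$ with $f(x)-f(\bar x)\ge\frac\kappa2|x-\bar x|^2$ for $|x-\bar x|\le\gamma$. *)

From Stdlib Require Import Reals Lra.
Open Scope R_scope.

(* The function of the example, specified by its defining equations.
   The pieces cover R and are pairwise disjoint, so exactly one function
   satisfies this specification. *)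
Definition f_spec (f : R -> R) : Prop :=
  f 0 = 0 /\
  (forall x, 1 <= x -> f x = x) /\
  (forall (n : nat) x, 3 * / 2 ^ (n + 2) <= x < / 2 ^ n -> f x = / 2 ^ n) /\
  (forall (n : nat) x, / 2 ^ (n + 1) <= x < 3 * / 2 ^ (n + 2) ->
      f x = 2 * x - / 2 ^ (n + 1)) /\
  (forall x, x < 0 -> f x = f (- x)).

Definition inner2 (u v : R * R) : R := fst u * fst v + snd u * snd v.
Definition norm2 (u : R * R) : R := sqrt (fst u ^ 2 + snd u ^ 2).
Definition sub2 (u v : R * R) : R * R := (fst u - fst v, snd u - snd v).

Definition cv2 (s : nat -> R * R) (l : R * R) : Prop :=
  Un_cv (fun k => fst (s k)) (fst l) /\ Un_cv (fun k => snd (s k)) (snd l).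

Definition regular_normal (Om : R * R -> Prop) (u v : R * R) : Prop :=
  forall eps, 0 < eps -> exists delta, 0 < delta /\
    forall u', Om u' -> norm2 (sub2 u' u) < delta ->
      inner2 v (sub2 u' u) <= eps * norm2 (sub2 u' u).

Definition limiting_normal (Om : R * R -> Prop) (u v : R * R) : Prop :=
  exists (us vs : nat -> R * R),
    (forall k, Om (us k)) /\ cv2 us u /\ cv2 vs v /\
    (forall k, regular_normal Om (us k) (vs k)).

Definition epi (f : R -> R) : R * R -> Prop := fun p => f (fst p) <= snd p.

Definition subdiff (f : R -> R) (x v : R) : Prop :=
  limiting_normal (epi f) (x, f x) (v, -1).

Definition gph_subdiff (f : R -> R) : R * R -> Prop :=
  fun p => subdiff f (fst p) (snd p).

Definition tangent_cone (Om : R * R -> Prop) (u v : R * R) : Prop :=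
  exists (t : nat -> R) (vs : nat -> R * R),
    (forall k, 0 < t k) /\ Un_cv t 0 /\ cv2 vs v /\
    (forall k, Om (fst u + t k * fst (vs k), snd u + t k * snd (vs k))).

Definition D_subdiff (f : R -> R) (x v w z : R) : Prop :=
  tangent_cone (gph_subdiff f) (x, v) (w, z).

Definition strong_local_minimizer (f : R -> R) (xb : R) : Prop :=
  exists kappa gamma, 0 < kappa /\ 0 < gamma /\
    forall x, Rabs (x - xb) <= gamma -> f x - f xb >= kappa / 2 * (x - xb) ^ 2.

(* On each dyadic interval [2^-(n+1), 2^-n) the function f stays above the
   identity, so f x >= |x| >= x^2 on [-1, 1].  On the other hand f is constant
   on the plateaus [3 * 2^-(n+2), 2^-n), so every point of a plateau is a local
   minimizer and 0 is a subgradient there; the plateau midpoints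
   ±(7/8) 2^-k accumulate at 0 along any direction w, which puts (w, 0) in the
   tangent cone to gph ∂f at (0, 0). *)

From Stdlib Require Import Reals Lra Lia.
Open Scope R_scope.

Lemma Rabs_le_norm2 a b : Rabs a <= norm2 (a, b).
Proof.
  unfold norm2; simpl. rewrite <- sqrt_Rsqr_abs.
  apply sqrt_le_1_alt. unfold Rsqr. nra.
Qed.

Lemma norm2_ge0 u : 0 <= norm2 u.
Proof. apply sqrt_pos. Qed.

Lemma cv_const (c : R) : Un_cv (fun _ => c) c.
Proof.
  intros eps Heps. exists 0%nat. intros n _.
  unfold R_dist. rewrite Rminus_diag, Rabs_R0. lra.
Qed.

Lemma subdiff_local_min (f : R -> R) x d :
  0 < d -> (forall y, Rabs (y - x) < d -> f x <= f y) -> subdiff f x 0.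
Proof.
  intros Hd Hmin.
  exists (fun _ => (x, f x)), (fun _ => (0, -1)).
  split; [intros; unfold epi; simpl; lra|].
  split; [split; apply cv_const|].
  split; [split; apply cv_const|].
  intros _ eps Heps. exists d. split; [exact Hd|].
  intros [y r] Hy Hnear. unfold epi in Hy; unfold inner2, sub2 in *; simpl in *.
  pose proof (Rabs_le_norm2 (y - x) (r - f x)).
  pose proof (norm2_ge0 (y - x, r - f x)).
  assert (f x <= f y) by (apply Hmin; lra).
  nra.
Qed.

Lemma tangent_cone_seq (Om : R * R -> Prop) u v (t : nat -> R) :
  (forall k, 0 < t k) -> Un_cv t 0 ->
  (forall k, Om (fst u + t k * fst v, snd u + t k * snd v)) ->
  tangent_cone Om u v.
Proof.
  intros Ht Htcv HOm. exists t, (fun _ => v).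
  repeat split; auto; apply cv_const.
Qed.

Lemma pow2_pos n : 0 < 2 ^ n.
Proof. apply pow_lt; lra. Qed.

Lemma inv_pow2_le x : 0 < x -> exists N, / 2 ^ N <= x.
Proof.
  intros Hx. destruct (archimed_cor1 x Hx) as [N [HN HN0]].
  exists N. assert (0 < INR N) by (apply lt_0_INR; lia).
  assert (INR N <= 2 ^ N).
  { clear. induction N as [|N IH]; [simpl; lra|].
    rewrite S_INR; simpl. assert (1 <= 2 ^ N) by (apply pow_R1_Rle; lra). lra. }
  assert (/ 2 ^ N <= / INR N) by (apply Rinv_le_contravar; lra).
  lra.
Qed.

Lemma dyadic_interval x : 0 < x < 1 -> exists n, / 2 ^ (n + 1) <= x < / 2 ^ n.
Proof.
  intros Hx. destruct (inv_pow2_le x) as [N HN]; [lra|].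
  assert (HxN : / 2 ^ N <= x < 1) by lra. clear HN Hx. revert x HxN.
  induction N as [|N IH]; intros x Hx.
  - simpl in Hx. rewrite Rinv_1 in Hx. lra.
  - destruct (Rle_lt_dec (/ 2 ^ N) x) as [Hle|Hlt].
    + apply IH; lra.
    + exists N. rewrite Nat.add_1_r. lra.
Qed.

Section Example.

Variable f : R -> R.
Hypothesis Hf : f_spec f.

Lemma f_0 : f 0 = 0.
Proof. now destruct Hf. Qed.

Lemma f_ge_id x : 0 < x < 1 -> x <= f x.
Proof.
  destruct Hf as [_ [_ [Hflat [Hlin _]]]]. intros Hx.
  destruct (dyadic_interval x Hx) as [n Hn].
  destruct (Rle_lt_dec (3 * / 2 ^ (n + 2)) x).
  - rewrite (Hflat n x); lra.
  - rewrite (Hlin n x); lra.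
Qed.

Lemma f_ge_sqr x : -1 <= x <= 1 -> x ^ 2 <= f x.
Proof.
  destruct Hf as [H0 [Hid [_ [_ Hsym]]]].
  assert (Hpos : forall y, 0 < y <= 1 -> y ^ 2 <= f y).
  { intros y Hy. destruct (Req_dec y 1) as [->|Hy1].
    - rewrite Hid; lra.
    - pose proof (f_ge_id y ltac:(lra)). nra. }
  intros Hx. destruct (Rtotal_order x 0) as [Hneg|[->|Hgt]].
  - rewrite Hsym by lra. pose proof (Hpos (- x) ltac:(lra)). nra.
  - rewrite H0. lra.
  - apply Hpos; lra.
Qed.

Lemma f_ge0 x : 0 <= f x.
Proof.
  destruct Hf as [_ [Hid [_ [_ Hsym]]]].
  assert (Hpos : forall y, 0 <= y -> 0 <= f y).
  { intros y Hy. destruct (Rle_lt_dec 1 y).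
    - rewrite Hid; lra.
    - pose proof (f_ge_sqr y ltac:(lra)). nra. }
  destruct (Rle_lt_dec 0 x); auto.
  rewrite Hsym by lra. apply Hpos; lra.
Qed.

(* The plateau [3 * 2^-(k+2), 2^-k) and its mirror image, as a ball around
   the midpoints ±(7/8) 2^-k. *)
Lemma f_plateau k y :
  Rabs (Rabs y - 7 / 8 * / 2 ^ k) < / 8 * / 2 ^ k -> f y = / 2 ^ k.
Proof.
  destruct Hf as [_ [_ [Hflat [_ Hsym]]]]. intros Hy.
  assert (Hpow : / 2 ^ (k + 2) = / 4 * / 2 ^ k).
  { rewrite pow_add, Rinv_mult. simpl. lra. }
  pose proof (Rinv_0_lt_compat _ (pow2_pos k)).
  apply Rabs_def2 in Hy.
  destruct (Rle_lt_dec 0 y).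
  - rewrite Rabs_right in Hy by lra. apply Hflat. rewrite Hpow. lra.
  - rewrite Rabs_left in Hy by lra. rewrite Hsym by lra.
    apply Hflat. rewrite Hpow. lra.
Qed.

Lemma subdiff_f_plateau k x : Rabs x = 7 / 8 * / 2 ^ k -> subdiff f x 0.
Proof.
  intros Hx. pose proof (Rinv_0_lt_compat _ (pow2_pos k)).
  apply (subdiff_local_min f x (/ 8 * / 2 ^ k)); [lra|].
  intros y Hy. rewrite (f_plateau k x), (f_plateau k y); [lra| |].
  - rewrite <- Hx. eapply Rle_lt_trans; [apply Rabs_triang_inv2|exact Hy].
  - rewrite Hx, Rminus_diag, Rabs_R0. lra.
Qed.

Lemma subdiff_f_0 : subdiff f 0 0.
Proof.
  apply (subdiff_local_min f 0 1); [lra|].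
  intros y _. rewrite f_0. apply f_ge0.
Qed.

Lemma tangent_cone_gph_subdiff_f w :
  tangent_cone (gph_subdiff f) (0, 0) (w, 0).
Proof.
  destruct (Req_dec w 0) as [->|Hw].
  - apply (tangent_cone_seq _ _ _ (fun k => 1 / 2 ^ k)).
    + intros k. pose proof (pow2_pos k). unfold Rdiv. apply Rmult_lt_0_compat;
        [lra|now apply Rinv_0_lt_compat].
    + apply cv_pow_half.
    + intros k. unfold gph_subdiff; simpl.
      rewrite Rmult_0_r, Rplus_0_r. exact subdiff_f_0.
  - assert (Aw : 0 < Rabs w) by (apply Rabs_pos_lt; exact Hw).
    apply (tangent_cone_seq _ _ _ (fun k => 7 / 8 / Rabs w / 2 ^ k)).
    + intros k. pose proof (pow2_pos k). unfold Rdiv.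
      repeat apply Rmult_lt_0_compat; try lra; now apply Rinv_0_lt_compat.
    + apply cv_pow_half.
    + intros k. unfold gph_subdiff; simpl.
      rewrite Rmult_0_r, Rplus_0_r, Rplus_0_l. apply (subdiff_f_plateau k).
      pose proof (pow2_pos k).
      rewrite Rabs_mult, Rabs_right.
      * field. lra.
      * apply Rle_ge. unfold Rdiv.
        repeat apply Rmult_le_pos; try lra; left; now apply Rinv_0_lt_compat.
Qed.

End Example.

Theorem mainTheorem4 (f : R -> R) (Hf : f_spec f) :
  (forall x, -1 <= x <= 1 -> f x >= f 0 + x ^ 2) /\
  strong_local_minimizer f 0 /\
  (forall w, tangent_cone (gph_subdiff f) (0, 0) (w, 0)) /\
  (forall w, w <> 0 -> D_subdiff f 0 0 w 0 /\
     exists z, D_subdiff f 0 0 w z /\ z * w = 0).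
Proof.
  assert (Hgrowth : forall x, -1 <= x <= 1 -> f x >= f 0 + x ^ 2).
  { intros x Hx. rewrite (f_0 f Hf). pose proof (f_ge_sqr f Hf x Hx). lra. }
  pose proof (tangent_cone_gph_subdiff_f f Hf) as Htan.
  split; [exact Hgrowth|]. split.
  - exists 2, 1. repeat split; try lra. intros x Hx.
    rewrite Rminus_0_r in *.
    pose proof (Rle_abs x). pose proof (Rle_abs (- x)). rewrite Rabs_Ropp in *.
    pose proof (Hgrowth x ltac:(lra)). lra.
  - split; [exact Htan|].
    intros w _. split; [exact (Htan w)|].
    exists 0. split; [exact (Htan w)|ring].
Qed.
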